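(* Let $S$ be a topological semigroup with an open right unit, and let $\chi(S)$ be its character. Then the topology of $S$ is generated by a family $\mathcal D$ of left-subinvariant $\overline{\mathsf{dist}}$-continuous quasi-pseudometrics with $|\mathcal D|\le\chi(S)$. If moreover $S$ is semiregular, the quasi-pseudometrics in $\mathcal D$ can additionally be chosen right-continuous.
   Context: A topological semigroup is a topological space with continuous associative multiplication; $e$ is an open right unit if $xe=x$ for all $x$ and $xV$ is a neighborhood of $x$ for every neighborhood $V$ of $e$ and every $x$. $\chi(S)$ is the least cardinal $\kappa$ such that every point has a neighborhood base of cardinality $\le\kappa$. Semiregular: every neighborhood $O_x$ of $x$ contains $\mathrm{int}\,\overline{U_x}$ for some neighborhood $U_x$ of $x$. A quasi-pseudometric is $d:S\times S\to[0,\infty)$ with $d(x,x)=0$ and the triangle inequality; left-subinvariant if $d(zx,zy)\le d(x,y)$ for all $x,y,z$; right-continuous if $y\mapsto d(x,y)$ is continuous for each $x$; $\overline{\mathsf{dist}}$-continuous if for every non-empty $A\subset S$ the function $x\mapsto\inf\{\varepsilon>0:x\in\overline{B_d(A,\varepsilon)}\}$ is continuous, where $B_d(A,\varepsilon)=\{y:\exists a\in A\ d(a,y)<\varepsilon\}$. A family $\mathcal D$ generates the topology if $\{B_d(x,\varepsilon):d\in\mathcal D,x\in S,\varepsilon>0\}$ is a subbase of it, where $B_d(x,\varepsilon)=\{y:d(x,y)<\varepsilon\}$. *)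

From HB Require Import structures.
From mathcomp Require Import all_boot all_order all_algebra.
From mathcomp Require Import all_classical all_reals all_analysis.
Set Implicit Arguments. Unset Strict Implicit. Unset Printing Implicit Defensive.
Import Order.TTheory GRing.Theory Num.Theory numFieldNormedType.Exports.
Local Open Scope classical_set_scope.
Local Open Scope ring_scope.

Section Defs.
Context {S : topologicalType}.

Definition topological_semigroup (mul : S -> S -> S) : Prop :=
  (forall x y z, mul x (mul y z) = mul (mul x y) z) /\
  continuous (fun p : S * S => mul p.1 p.2).

Definition open_right_unit (mul : S -> S -> S) (e : S) : Prop :=
  (forall x, mul x e = x) /\
  (forall (V : set S) (x : S), nbhs e V -> nbhs x (mul x @` V)).

Definition nbhs_base (x : S) (B : set (set S)) : Prop :=
  (forall U, B U -> nbhs x U) /\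
  (forall V, nbhs x V -> exists2 U, B U & U `<=` V).

(* "chi(S) <= |K|": every point has a neighborhood base of cardinality <= |K| *)
Definition character_le (K : Type) : Prop :=
  forall x : S, exists B : set (set S), nbhs_base x B /\ (B #<= [set: K])%card.

Definition semiregular : Prop :=
  forall (x : S) (O : set S), nbhs x O ->
    exists U : set S, nbhs x U /\ interior (closure U) `<=` O.

Variable R : realType.

Definition quasi_pseudometric (d : S -> S -> R) : Prop :=
  (forall x y, 0 <= d x y) /\ (forall x, d x x = 0) /\
  (forall x y z, d x z <= d x y + d y z).

Definition left_subinvariant (mul : S -> S -> S) (d : S -> S -> R) : Prop :=
  forall x y z, d (mul z x) (mul z y) <= d x y.

Definition right_continuous_qpm (d : S -> S -> R) : Prop :=
  forall x, continuous (fun y => d x y).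

Definition qball (d : S -> S -> R) (x : S) (eps : R) : set S :=
  [set y | d x y < eps].

Definition qball_set (d : S -> S -> R) (A : set S) (eps : R) : set S :=
  [set y | exists2 a, A a & d a y < eps].

Definition cl_dist (d : S -> S -> R) (A : set S) (x : S) : R :=
  inf [set eps : R | 0 < eps /\ closure (qball_set d A eps) x].

Definition cl_dist_continuous (d : S -> S -> R) : Prop :=
  forall A : set S, A !=set0 -> continuous (cl_dist d A).

(* {B_d(x,eps) : d in D, x in S, eps > 0} is a subbase of the topology of S:
   all these balls are open, and every open set is a union of finite
   intersections of them (the empty intersection being S). *)
Definition generates_topology (D : set (S -> S -> R)) : Prop :=
  (forall d x eps, D d -> 0 < eps -> open (qball d x eps)) /\
  (forall (U : set S) (x : S), open U -> U x ->
     exists s : seq ((S -> S -> R) * S * R),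
       (forall t, t \in s -> [/\ D t.1.1, 0 < t.2 & qball t.1.1 t.1.2 t.2 x]) /\
       (forall y, (forall t, t \in s -> qball t.1.1 t.1.2 t.2 y) -> U y)).

End Defs.

(* For a neighbourhood V of the right unit e pick neighbourhoods
   V = U_0, U_1, ... of e with U_(n+1)^3 included in U_n, and let d(x, y) be
   the infimum, capped at 1, of the weights sum_i 2^-(n_i) of the chains
   y = x u_1 ... u_k with u_i in U_(n_i).  Concatenating and left-multiplying
   chains makes d a left-subinvariant quasi-pseudometric, and the
   Birkhoff-Kakutani halving argument shows that d(x, y) < 2^-m forces
   y in x U_m; as e is an open right unit, the d-balls are open and
   B_d(x, 1) lies in x V.  Letting V run through a neighbourhood base at e
   gives at most chi(S) such d generating the topology, and their
   dist-continuity follows from left-subinvariance and the continuity of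
   right translations.  In the semiregular case, d is replaced by
   x, y |-> inf {eps | y in closure B_d(x, eps)}, which is right-continuous;
   since chains can be replayed from any starting point it still satisfies
   the triangle inequality, and semiregularity keeps its balls a subbase. *)

From mathcomp Require Import all_boot all_order all_algebra.
From mathcomp Require Import all_classical all_reals all_analysis.
From mathcomp Require Import lra.
Import Order.TTheory GRing.Theory Num.Theory.
Local Open Scope classical_set_scope.
Local Open Scope ring_scope.
Set Implicit Arguments. Unset Strict Implicit.

Section Chains.
Variables (T : Type) (mul : T -> T -> T) (e : T).
Hypotheses (mulA : associative mul) (mulx1 : right_id e mul).
Variable U : nat -> set T.

Fixpoint chain (x : T) (ns : seq nat) (y : T) : Prop :=
  if ns is n :: ns' then exists2 u, U n u & chain (mul x u) ns' y else y = x.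

Lemma chain_cat x a y b z : chain x a y -> chain y b z -> chain x (a ++ b) z.
Proof.
elim: a x => [|n a IH] x /=; first by move=> ->.
by case=> u Uu xay yz; exists u => //; apply: IH xay yz.
Qed.

Lemma chain_catP x a b z : chain x (a ++ b) z -> exists2 y, chain x a y & chain y b z.
Proof.
elim: a x => [|n a IH] x /=; first by exists x.
by case=> u Uu /IH[y xay yz]; exists y => //; exists u.
Qed.

Lemma chain_mull x ns y z : chain x ns y -> chain (mul z x) ns (mul z y).
Proof.
elim: ns x => [|n ns IH] x /=; first by move=> ->.
by case=> u Uu xy; exists u => //; rewrite -mulA; apply: IH.
Qed.

Lemma chain_translate x ns y :
  chain x ns y -> exists g, y = mul x g /\ forall x', chain x' ns (mul x' g).
Proof.
elim: ns x => [|n ns IH] x /=.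
  by move=> ->; exists e; split => [|x']; rewrite mulx1.
case=> u Uu /IH[g [-> Hg]]; exists (mul u g); split; first by rewrite mulA.
by move=> x'; exists u => //; rewrite mulA.
Qed.

End Chains.

Section Dyadic.
Variable R : archiRealFieldType.

Definition dyadic (n : nat) : R := (2 ^+ n)^-1.
Definition dyadic_sum (ns : seq nat) : R := \sum_(n <- ns) dyadic n.

Lemma dyadic_gt0 n : 0 < dyadic n.
Proof. by rewrite invr_gt0 exprn_gt0. Qed.

Lemma dyadic0 : dyadic 0 = 1.
Proof. by rewrite /dyadic expr0 invr1. Qed.

Lemma dyadicS n : dyadic n.+1 = dyadic n / 2.
Proof. by rewrite /dyadic exprSr invfM. Qed.

Lemma le_dyadic n m : (n <= m)%N -> dyadic m <= dyadic n.
Proof.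
move=> nm; rewrite lef_pV2 ?posrE ?exprn_gt0 //.
by rewrite ler_eXn2l // ltr1n.
Qed.

Lemma lt_dyadic n m : dyadic n < dyadic m -> (m < n)%N.
Proof. by rewrite ltnNge; apply: contraTN => /le_dyadic; rewrite leNgt => ->. Qed.

Lemma exists_dyadic_lt (r : R) : 0 < r -> exists m, dyadic m < r.
Proof.
move=> r0; have [m rm] : exists m : nat, r^-1 < m%:R.
  by exists (Num.Def.archi_bound r^-1); apply: archi_boundP; rewrite invr_ge0 ltW.
exists m; rewrite -(invrK r) ltf_pV2 ?posrE ?exprn_gt0 ?invr_gt0 //.
apply: (lt_le_trans rm); elim: m {rm} => [|m IH]; first by rewrite exprn_ge0.
by rewrite exprS -natr1 mulrDl mul1r lerD // exprn_ege1 // ler1n.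
Qed.

Lemma dyadic_sum_cons n ns : dyadic_sum (n :: ns) = dyadic n + dyadic_sum ns.
Proof. by rewrite /dyadic_sum big_cons. Qed.

Lemma dyadic_sum_cat a b : dyadic_sum (a ++ b) = dyadic_sum a + dyadic_sum b.
Proof. by rewrite /dyadic_sum big_cat. Qed.

Lemma dyadic_sum_ge0 ns : 0 <= dyadic_sum ns.
Proof. by apply: sumr_ge0 => n _; apply/ltW/dyadic_gt0. Qed.

Lemma dyadic_sum_split ns (h : R) : ns != [::] -> 0 < h ->
  exists pre n suf, [/\ ns = pre ++ n :: suf, dyadic_sum pre < h &
     suf = [::] \/ h <= dyadic_sum pre + dyadic n].
Proof.
elim: ns h => [|a ns IH] h // _ h0.
have [ha|ha] := leP h (dyadic a).
  by exists [::], a, ns; rewrite /dyadic_sum big_nil add0r; split => //; right.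
case: ns IH => [|b ns] IH.
  by exists [::], a, [::]; rewrite /dyadic_sum big_nil; split => //; left.
have [|pre [n [suf [-> Hpre Hsuf]]]] := IH (h - dyadic a) isT.
  by rewrite subr_gt0.
exists (a :: pre), n, suf; rewrite !dyadic_sum_cons; split => //.
  by rewrite -ltrBrDl.
by case: Hsuf => [|Hsuf]; [left | right; rewrite -addrA -lerBlDl].
Qed.

End Dyadic.

Section ChainHalving.
Variables (R : archiRealFieldType) (T : Type) (mul : T -> T -> T) (e : T).
Hypotheses (mulA : associative mul) (mulx1 : right_id e mul).
Variable U : nat -> set T.
Hypothesis U_e : forall n, U n e.
Hypothesis U_cube : forall n a b c,
  U n.+1 a -> U n.+1 b -> U n.+1 c -> U n (mul a (mul b c)).

Lemma U_antitone m n u : (m <= n)%N -> U n u -> U m u.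
Proof.
move=> /subnK <-; elim: (n - m)%N => [|k IH] // Uu.
by apply: IH; have := U_cube Uu (U_e _) (U_e _); rewrite !mulx1.
Qed.

(* Cut the chain where its partial sums reach 2^-(m+1): both outer pieces
   weigh less than 2^-(m+1) and the middle step less than 2^-m, so by
   induction y = x * a * u * c with a, u, c in U (m+1). *)
Lemma chain_halving m ns x y : chain mul U x ns y ->
  dyadic_sum R ns < dyadic R m -> exists2 u, U m u & y = mul x u.
Proof.
have [k] := ubnP (size ns); elim: k => // k IH in m ns x y *.
case: ns => [_ /= -> _|n0 ns0 sz ch hs]; first by exists e; rewrite ?mulx1.
have [pre [n [suf [Ens Hpre Hsuf]]]] :=
  dyadic_sum_split (ns := n0 :: ns0) isT (dyadic_gt0 R m.+1).
rewrite Ens size_cat /= addnS ltnS in sz; rewrite Ens in ch hs.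
have [x1 ch1 /= [u Uu ch2]] := chain_catP ch.
have [a Ua x1E] := IH _ _ _ _ (leq_ltn_trans (leq_addr _ _) sz) ch1 Hpre.
subst x1.
rewrite dyadic_sum_cat dyadic_sum_cons in hs.
have hm : dyadic R m = dyadic R m.+1 + dyadic R m.+1 by rewrite dyadicS -splitr.
have hsuf : dyadic_sum R suf < dyadic R m.+1.
  case: Hsuf => [->|]; first by rewrite /dyadic_sum big_nil dyadic_gt0.
  by move: hs; rewrite hm; lra.
have [c Uc ->] := IH _ _ _ _ (leq_ltn_trans (leq_addl _ _) sz) ch2 hsuf.
have hn : dyadic R n < dyadic R m.
  by move: hs (dyadic_sum_ge0 R pre) (dyadic_sum_ge0 R suf); lra.
exists (mul a (mul u c)); last by rewrite !mulA.
by apply: U_cube => //; apply: U_antitone (lt_dyadic hn) Uu.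
Qed.

End ChainHalving.

Section ChainDist.
Variables (R : realType) (T : Type) (mul : T -> T -> T) (e : T).
Hypotheses (mulA : associative mul) (mulx1 : right_id e mul).
Variable U : nat -> set T.

Definition chain_weights x y : set R :=
  [set 1] `|` [set dyadic_sum R ns | ns in [set ns | chain mul U x ns y]].

Definition chain_dist x y : R := inf (chain_weights x y).

Lemma chain_weights_neq0 x y : chain_weights x y !=set0.
Proof. by exists 1; left. Qed.

Lemma chain_weights_ge0 x y : lbound (chain_weights x y) 0.
Proof. by move=> r [->|[ns _ <-]]; [apply: ler01 | apply: dyadic_sum_ge0]. Qed.

Lemma chain_dist_le x y r : chain_weights x y r -> chain_dist x y <= r.
Proof. by move=> xyr; apply: ge_inf => //; exists 0; apply: chain_weights_ge0. Qed.

Lemma chain_dist_lt x y c :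
  chain_dist x y < c -> exists2 r, chain_weights x y r & r < c.
Proof. exact/inf_lt/chain_weights_neq0. Qed.

Lemma chain_dist_ge0 x y : 0 <= chain_dist x y.
Proof.
by apply: lb_le_inf; [exact: chain_weights_neq0 | exact: chain_weights_ge0].
Qed.

Lemma chain_dist_le1 x y : chain_dist x y <= 1.
Proof. by apply: chain_dist_le; left. Qed.

Lemma chain_dist_xx x : chain_dist x x = 0.
Proof.
apply/eqP; rewrite eq_le chain_dist_ge0 andbT.
by apply: chain_dist_le; right; exists [::]; rewrite //= /dyadic_sum big_nil.
Qed.

Lemma chain_dist_triangle x y z :
  chain_dist x z <= chain_dist x y + chain_dist y z.
Proof.
have weights_le r s :
    chain_weights x y r -> chain_weights y z s -> chain_dist x z <= r + s.
  move=> [->|[a xay <-]] => [/chain_weights_ge0|[->|[b ybz <-]]].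
  - by move=> s0; apply: le_trans (chain_dist_le1 _ _) _; rewrite lerDl.
  - by apply: le_trans (chain_dist_le1 _ _) _; rewrite lerDr dyadic_sum_ge0.
  - apply: chain_dist_le; right; exists (a ++ b); last by rewrite dyadic_sum_cat.
    exact: chain_cat xay ybz.
rewrite -lerBlDr; apply: lb_le_inf; first exact: chain_weights_neq0.
move=> s yzs; rewrite lerBlDr addrC -lerBlDr.
apply: lb_le_inf; first exact: chain_weights_neq0.
by move=> r xyr; rewrite lerBlDr addrC; apply: weights_le.
Qed.

Lemma chain_dist_mull x y z : chain_dist (mul z x) (mul z y) <= chain_dist x y.
Proof.
apply: lb_le_inf; first exact: chain_weights_neq0.
move=> r [->|[ns xy <-]]; first exact: chain_dist_le1.
by apply: chain_dist_le; right; exists ns => //; apply: chain_mull.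
Qed.

Lemma chain_dist_step m x u : U m u -> chain_dist x (mul x u) <= dyadic R m.
Proof.
move=> Uu; apply: chain_dist_le; right; exists [:: m].
  by exists u.
by rewrite dyadic_sum_cons /dyadic_sum big_nil addr0.
Qed.

Lemma chain_dist_translate x y s : chain_dist x y < s -> s <= 1 ->
  exists g, y = mul x g /\ forall x', chain_dist x' (mul x' g) < s.
Proof.
move=> /chain_dist_lt[r [->|[ns xy <-]] rs] s1.
  by move: rs; rewrite ltNge s1.
have [g [-> Hg]] := chain_translate mulA mulx1 xy.
exists g; split => // x'; apply: le_lt_trans rs.
by apply: chain_dist_le; right; exists ns.
Qed.

Hypothesis U_e : forall n, U n e.
Hypothesis U_cube : forall n a b c,
  U n.+1 a -> U n.+1 b -> U n.+1 c -> U n (mul a (mul b c)).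

Lemma chain_dist_lt_dyadic m x y :
  chain_dist x y < dyadic R m -> exists2 u, U m u & y = mul x u.
Proof.
move=> /chain_dist_lt[r [->|[ns xy <-]] rm].
  by move: rm; rewrite ltNge (le_trans (le_dyadic R (leq0n m))) // dyadic0.
exact: (chain_halving mulA mulx1 U_e U_cube xy rm).
Qed.

End ChainDist.

Section ClosureDistance.
Variables (R : realType) (S : topologicalType) (d : S -> S -> R) (A : set S).
Hypotheses (d_ge0 : forall x y, 0 <= d x y) (A_neq0 : A !=set0).

Let cl_weights y := [set eps : R | 0 < eps /\ closure (qball_set d A eps) y].

Let cl_weights_neq0 y : cl_weights y !=set0.
Proof.
case: A_neq0 => a Aa; exists (d a y + 1); split; first by rewrite ltr_pwDr.
by apply: subset_closure; exists a => //; rewrite ltrDl.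
Qed.

Lemma cl_dist_le y r :
  0 < r -> closure (qball_set d A r) y -> cl_dist d A y <= r.
Proof. by move=> r0 yr; apply: ge_inf; [exists 0 => s [/ltW] | split]. Qed.

Lemma cl_dist_ge0 y : 0 <= cl_dist d A y.
Proof. by apply: lb_le_inf; [exact: cl_weights_neq0 | move=> s [/ltW]]. Qed.

Lemma cl_dist_ge y c :
  (forall r, 0 < r -> closure (qball_set d A r) y -> c <= r) -> c <= cl_dist d A y.
Proof.
by move=> cle; apply: lb_le_inf; [exact: cl_weights_neq0 | move=> r []; apply: cle].
Qed.

Lemma cl_dist_lt y c : cl_dist d A y < c ->
  exists2 r, 0 < r /\ closure (qball_set d A r) y & r < c.
Proof. exact/inf_lt/cl_weights_neq0. Qed.

Lemma qball_setS r s : r <= s -> qball_set d A r `<=` qball_set d A s.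
Proof. by move=> rs t [a Aa ?]; exists a => //; apply: lt_le_trans rs. Qed.

Lemma cl_dist_lsc x eps : 0 < eps ->
  nbhs x [set t | cl_dist d A x - eps < cl_dist d A t].
Proof.
move=> eps0; pose c := cl_dist d A x - eps / 2.
have ltc : cl_dist d A x - eps < c.
  by rewrite /c ltrD2l ltrN2 ltr_pdivrMr // ltr_pMr // ltr1n.
have [c0|c0] := leP c 0.
  by apply: nearW => t; apply: lt_le_trans ltc (le_trans c0 (cl_dist_ge0 t)).
have notclx : ~ closure (qball_set d A c) x.
  by move=> /(cl_dist_le c0); rewrite /c; have := divr_gt0 eps0 (@ltr0n R 2); lra.
have : nbhs x (~` closure (qball_set d A c)).
  by apply: open_nbhs_nbhs; split => //; exact/closed_openC/closed_closure.
apply: filterS => t notclt; apply: lt_le_trans ltc _.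
apply: cl_dist_ge => r r0 clr; rewrite leNgt; apply/negP => rc; apply: notclt.
exact: closureS (qball_setS (ltW rc)) _ clr.
Qed.

End ClosureDistance.

Section TopologicalSemigroup.
Variables (R : realType) (S : topologicalType) (mul : S -> S -> S) (e : S).
Hypotheses (mulA : associative mul) (mulx1 : right_id e mul).
Hypothesis mul_cont : continuous (fun p : S * S => mul p.1 p.2).
Hypothesis open_unit : forall (V : set S) x, nbhs e V -> nbhs x (mul x @` V).

Lemma continuous_mulr u : continuous (mul^~ u).
Proof.
move=> x; apply: (@continuous_comp _ _ _ (fun z => (z, u))
                    (fun p : S * S => mul p.1 p.2)).
  by apply: cvg_pair; [exact: cvg_id | exact: cvg_cst].
exact: mul_cont.
Qed.

Lemma continuous_mull z : continuous (mul z).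
Proof.
move=> x; apply: (@continuous_comp _ _ _ (fun y => (z, y))
                    (fun p : S * S => mul p.1 p.2)).
  by apply: cvg_pair; [exact: cvg_cst | exact: cvg_id].
exact: mul_cont.
Qed.

Lemma nbhs_unit_preimage x W : nbhs x W -> nbhs e (mul x @^-1` W).
Proof.
by move=> xW; have := @continuous_mull x e; rewrite /continuous_at mulx1; apply.
Qed.

Lemma nbhs_unit_square_root W : nbhs e W ->
  exists2 W1, nbhs e W1 & forall a b, W1 a -> W1 b -> W (mul a b).
Proof.
move=> eW; have : nbhs (mul (e, e).1 (e, e).2) W by rewrite /= mulx1.
move=> /(@mul_cont (e, e))[[A B] /= [eA eB] AB].
exists (A `&` B) => [|a b [Aa _] [_ Bb]]; first exact: filterI.
exact: (AB (a, b)).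
Qed.

Lemma nbhs_unit_cube_root W : nbhs e W -> exists2 W', nbhs e W' &
  forall a b c, W' a -> W' b -> W' c -> W (mul a (mul b c)).
Proof.
move=> /nbhs_unit_square_root[W1 eW1 W1W].
have [W2 eW2 W2W1] := nbhs_unit_square_root eW1.
exists (W1 `&` W2) => [|a b c [Wa _] [_ Wb] [_ Wc]]; first exact: filterI.
by apply: W1W => //; apply: W2W1.
Qed.

Definition cube_root_seq (V : set S) (U : nat -> set S) := [/\ U 0 = V,
  forall n, nbhs e (U n) &
  forall n a b c, U n.+1 a -> U n.+1 b -> U n.+1 c -> U n (mul a (mul b c))].

Lemma exists_cube_root_seqs :
  exists U : set S -> nat -> set S, forall V, nbhs e V -> cube_root_seq V (U V).
Proof.
have /choice[root rootP] : forall W : set S, exists W', nbhs e W ->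
    nbhs e W' /\ forall a b c, W' a -> W' b -> W' c -> W (mul a (mul b c)).
  move=> W; have [/nbhs_unit_cube_root[W' eW' W'W]|] := pselect (nbhs e W).
    by exists W'.
  by exists W.
exists (fun V n => iter n root V) => V eV.
have eU n : nbhs e (iter n root V) by elim: n => [|n IH] //=; case: (rootP _ IH).
by split => // n; case: (rootP _ (eU n)).
Qed.

Section SubinvariantDistance.
Variable d : S -> S -> R.
Hypotheses (d_qpm : quasi_pseudometric d) (d_sub : left_subinvariant mul d).
Hypothesis nbhs_ball_unit : forall eps, 0 < eps -> nbhs e (qball d e eps).

(* Right translation by a small u moves the d-balls around A only slightly,
   because d m (m u) <= d e u by left subinvariance. *)
Lemma cl_dist_usc (A : set S) x eps : A !=set0 -> 0 < eps ->
  nbhs x [set t | cl_dist d A t < cl_dist d A x + eps].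
Proof.
case: d_qpm => d_ge0 [_ d_tri] A_neq0 eps0.
have eps2 : 0 < eps / 2 by rewrite divr_gt0.
have : cl_dist d A x < cl_dist d A x + eps / 2 by rewrite ltrDl.
move=> /(cl_dist_lt d_ge0 A_neq0)[r [r0 clr] rlt].
apply: filterS (open_unit x (nbhs_ball_unit eps2)) => _ [u eu <-].
have : cl_dist d A (mul x u) <= r + eps / 2.
  apply: (cl_dist_le (addr_gt0 r0 eps2)) => B /continuous_mulr.
  move=> /clr[m [[a Aa am] Bm]]; exists (mul m u); split => //; exists a => //.
  apply: le_lt_trans (d_tri _ m _) _; apply: ltrD => //.
  by apply: le_lt_trans eu; have := d_sub e u m; rewrite mulx1.
by rewrite /=; lra.
Qed.

Lemma cl_dist_subinvariant_continuous : cl_dist_continuous d.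
Proof.
move=> A A_neq0 x; apply/cvgrPdist_lt => eps eps0.
near=> t; rewrite ltr_distlC; apply/andP; split; near: t.
- by apply: cl_dist_lsc => //; case: d_qpm.
- exact: cl_dist_usc.
Unshelve. all: by end_near. Qed.

End SubinvariantDistance.

Section ChainTopology.
Variable U : nat -> set S.
Hypothesis U_nbhs : forall n, nbhs e (U n).
Hypothesis U_cube : forall n a b c,
  U n.+1 a -> U n.+1 b -> U n.+1 c -> U n (mul a (mul b c)).

Let U_e n : U n e := nbhs_singleton (U_nbhs n).
Local Notation d := (chain_dist R mul U).

Lemma chain_dist_qpm : quasi_pseudometric d.
Proof.
split; first exact: chain_dist_ge0.
by split; [exact: chain_dist_xx | exact: chain_dist_triangle].
Qed.

Lemma chain_dist_left_subinvariant : left_subinvariant mul d.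
Proof. by move=> x y z; apply: chain_dist_mull. Qed.

Lemma open_chain_ball x eps : open (qball d x eps).
Proof.
rewrite openE => y xy; have [m m_lt] : exists m, dyadic R m < eps - d x y.
  by apply: exists_dyadic_lt; rewrite subr_gt0.
apply: filterS (open_unit y (U_nbhs m)) => _ [u Uu <-].
have := chain_dist_triangle R mul U x y (mul y u).
have := chain_dist_step R mul y Uu.
by move: xy; rewrite /qball /=; lra.
Qed.

Lemma nbhs_chain_ball x eps : 0 < eps -> nbhs x (qball d x eps).
Proof.
move=> eps0; apply: open_nbhs_nbhs; split; first exact: open_chain_ball.
by rewrite /qball /= chain_dist_xx.
Qed.

Lemma chain_dist_cl_dist_continuous : cl_dist_continuous d.
Proof.
apply: cl_dist_subinvariant_continuous => [||eps eps0].
- exact: chain_dist_qpm.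
- exact: chain_dist_left_subinvariant.
- exact: nbhs_chain_ball.
Qed.

Lemma chain_ball1_sub x : qball d x 1 `<=` mul x @` U 0.
Proof.
move=> y; rewrite /qball /= -(dyadic0 R).
by case/(chain_dist_lt_dyadic mulA mulx1 U_e U_cube) => u Uu ->; exists u.
Qed.

End ChainTopology.

Section ClosureRegularization.
Variable d : S -> S -> R.
Hypotheses (d_qpm : quasi_pseudometric d) (d_sub : left_subinvariant mul d).
Hypotheses (d_le1 : forall x y, d x y <= 1) (d_cont : cl_dist_continuous d).
Hypothesis d_translate : forall x y s, d x y < s -> s <= 1 ->
  exists g, y = mul x g /\ forall x', d x' (mul x' g) < s.

Definition closure_dist x y := cl_dist d [set x] y.

Let d_ge0 : forall x y, 0 <= d x y. Proof. by case: d_qpm. Qed.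
Let set1_neq0 (x : S) : [set x] !=set0. Proof. by exists x. Qed.

Lemma qball_set1 x eps : qball_set d [set x] eps = qball d x eps.
Proof. by apply/seteqP; split => [y [_ -> //]|y xy]; exists x. Qed.

Lemma closure_dist_le x y r :
  0 < r -> closure (qball d x r) y -> closure_dist x y <= r.
Proof. by rewrite -qball_set1; apply: cl_dist_le. Qed.

Lemma closure_dist_ge0 x y : 0 <= closure_dist x y.
Proof. exact: (cl_dist_ge0 d_ge0 (set1_neq0 x)). Qed.

Lemma closure_dist_lt x y c : closure_dist x y < c ->
  exists2 r, 0 < r /\ closure (qball d x r) y & r < c.
Proof.
move=> /(cl_dist_lt d_ge0 (set1_neq0 x))[r [r0]].
by rewrite qball_set1; exists r.
Qed.

Lemma closure_dist_le1 x y : closure_dist x y <= 1.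
Proof.
apply/ler_addgt0Pr => eps eps0; apply: closure_dist_le; first by rewrite ltr_pwDr.
apply: subset_closure; rewrite /qball /=.
by apply: le_lt_trans (d_le1 x y) _; rewrite ltrDl.
Qed.

Lemma closure_dist_xx x : closure_dist x x = 0.
Proof.
apply/eqP; rewrite eq_le closure_dist_ge0 andbT.
apply/ler_addgt0Pr => eps eps0; rewrite add0r; apply: closure_dist_le => //.
by apply: subset_closure; rewrite /qball /=; case: d_qpm => _ [-> _].
Qed.

(* Every point of B_d(y, s) is y g with g moving any x' by less than s, so
   by continuity of right translation by g, B_d(y, s) lies in the closure of
   B_d(x, r + s) as soon as y does. *)
Lemma closure_qball_trans x y z r s : s <= 1 ->
  closure (qball d x r) y -> closure (qball d y s) z ->
  closure (qball d x (r + s)) z.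
Proof.
move=> s1 xry ysz; have /closure_id -> := @closed_closure _ (qball d x (r + s)).
apply: closureS ysz => _ /d_translate/(_ s1)[g [-> dg]] B /continuous_mulr.
move=> /xry[y' [xy' By']]; exists (mul y' g); split => //; rewrite /qball /=.
apply: le_lt_trans (ltrD xy' (dg y')); case: d_qpm => _ [_]; apply.
Qed.

Lemma closure_dist_triangle x y z :
  closure_dist x z <= closure_dist x y + closure_dist y z.
Proof.
have [yz1|yz1] := leP 1 (closure_dist y z).
  apply: le_trans (closure_dist_le1 _ _) (le_trans yz1 _).
  by rewrite lerDr closure_dist_ge0.
apply/ler_addgt0Pr => eps eps0; have eps2 : 0 < eps / 2 by rewrite divr_gt0.
have : closure_dist x y < closure_dist x y + eps / 2 by rewrite ltrDl.
move=> /closure_dist_lt[r [r0 xry] rlt].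
have : closure_dist y z < Order.min (closure_dist y z + eps / 2) 1.
  by rewrite lt_min ltrDl eps2 yz1.
move=> /closure_dist_lt[s [s0 ysz]]; rewrite lt_min => /andP[slt s1].
have := closure_dist_le (addr_gt0 r0 s0) (closure_qball_trans (ltW s1) xry ysz).
by move: rlt slt; lra.
Qed.

Lemma closure_dist_left_subinvariant : left_subinvariant mul closure_dist.
Proof.
move=> x y z; apply: (cl_dist_ge d_ge0 (set1_neq0 x)) => r r0.
rewrite qball_set1 => xry; apply: closure_dist_le => // B /continuous_mull.
move=> /xry[y' [xy' By']]; exists (mul z y'); split => //.
by apply: le_lt_trans xy'; apply: d_sub.
Qed.

Lemma closure_dist_right_continuous : right_continuous_qpm closure_dist.
Proof. by move=> x; apply: d_cont; exists x. Qed.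

Lemma open_closure_ball x eps : open (qball closure_dist x eps).
Proof.
rewrite openE => y xy.
have eps_y : 0 < eps - closure_dist x y by rewrite subr_gt0.
move: (@closure_dist_right_continuous x y) => /cvgrPdist_lt/(_ _ eps_y).
apply: filterS => t; rewrite ltr_distlC => /andP[_].
by move: xy; rewrite /qball /=; lra.
Qed.

Lemma closure_dist_qpm : quasi_pseudometric closure_dist.
Proof.
split; first exact: closure_dist_ge0.
by split; [exact: closure_dist_xx | exact: closure_dist_triangle].
Qed.

Lemma closure_dist_cl_dist_continuous : cl_dist_continuous closure_dist.
Proof.
apply: cl_dist_subinvariant_continuous => [||eps eps0].
- exact: closure_dist_qpm.
- exact: closure_dist_left_subinvariant.
 apply: open_nbhs_nbhs; split; first exact: open_closure_ball.
by rewrite /qball /= closure_dist_xx.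
Qed.

Lemma closure_ball1_sub x : qball closure_dist x 1 `<=` closure (qball d x 1).
Proof.
move=> y /closure_dist_lt[r [_ xry] r1]; apply: closureS xry => t.
by rewrite /qball /=; move/lt_trans; apply.
Qed.

End ClosureRegularization.

End TopologicalSemigroup.

Lemma generates_topology_ball1 (R : realType) (S : topologicalType)
    (D : set (S -> S -> R)) :
  (forall d, D d -> quasi_pseudometric d) ->
  (forall d x eps, D d -> open (qball d x eps)) ->
  (forall (W : set S) x, open W -> W x -> exists2 d, D d & qball d x 1 `<=` W) ->
  generates_topology D.
Proof.
move=> D_qpm D_open D_base; split=> [d x eps Dd _|W x oW Wx]; first exact: D_open.
have [d Dd xW] := D_base W x oW Wx; have [_ [dxx _]] := D_qpm d Dd.
exists [:: (d, x, 1)]; split => [t|y].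
  by rewrite mem_seq1 => /eqP->; split; rewrite // /qball /= dxx.
by move=> /(_ (d, x, 1)); rewrite mem_seq1 eqxx => /(_ isT)/xW.
Qed.

Section ChainDistanceFamily.
Variables (R : realType) (S : topologicalType) (mul : S -> S -> S) (e : S).
Hypotheses (mulA : associative mul) (mulx1 : right_id e mul).
Hypothesis mul_cont : continuous (fun p : S * S => mul p.1 p.2).
Hypothesis open_unit : forall (V : set S) x, nbhs e V -> nbhs x (mul x @` V).
Variables (B : set (set S)) (U : set S -> nat -> set S).
Hypothesis B_base : nbhs_base e B.
Hypothesis U_seq : forall V, B V -> cube_root_seq mul e V (U V).

Lemma translate_base x W : nbhs x W -> exists2 V, B V & mul x @` V `<=` W.
Proof.
move=> /(nbhs_unit_preimage mulx1 mul_cont)/B_base.2[V BV VW].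
by exists V => // _ [u /VW Wxu <-].
Qed.

Local Notation chain_dists := [set chain_dist R mul (U V) | V in B].

Lemma chain_dists_spec d : chain_dists d ->
  [/\ quasi_pseudometric d, left_subinvariant mul d, cl_dist_continuous d &
      forall x eps, open (qball d x eps)].
Proof.
move=> [V /U_seq[_ U_nbhs U_cube] <-]; split.
- exact: chain_dist_qpm.
- exact: chain_dist_left_subinvariant.
- exact: (chain_dist_cl_dist_continuous mulA mulx1 mul_cont open_unit U_nbhs).
- exact: (open_chain_ball open_unit U_nbhs).
Qed.

Lemma chain_dists_generate : generates_topology chain_dists.
Proof.
apply: generates_topology_ball1.
- by move=> d /chain_dists_spec[].
- by move=> d x eps /chain_dists_spec[].
move=> W x oW Wx; have [V BV xVW] := translate_base (open_nbhs_nbhs (conj oW Wx)).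
have [V0 U_nbhs U_cube] := U_seq BV.
exists (chain_dist R mul (U V)); first by exists V.
move=> y /(chain_ball1_sub mulA mulx1 U_nbhs U_cube)[u].
by rewrite V0 => Vu <-; apply: xVW; exists u.
Qed.

Local Notation closure_dists :=
  [set closure_dist (chain_dist R mul (U V)) | V in B].

Lemma closure_dists_spec d : closure_dists d ->
  [/\ quasi_pseudometric d, left_subinvariant mul d, cl_dist_continuous d,
      right_continuous_qpm d & forall x eps, open (qball d x eps)].
Proof.
move=> [V /U_seq[_ U_nbhs _] <-].
have c_qpm := chain_dist_qpm R mul (U V).
have c_sub := chain_dist_left_subinvariant R mulA (U V).
have c_le1 := chain_dist_le1 R mul (U V).
have c_cont :=
  chain_dist_cl_dist_continuous (R:=R) mulA mulx1 mul_cont open_unit U_nbhs.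
have c_translate := chain_dist_translate (R:=R) mulA mulx1 (U:=U V).
split.
- exact: (closure_dist_qpm mul_cont c_qpm c_le1 c_translate).
- exact: (closure_dist_left_subinvariant mul_cont c_qpm c_sub).
- exact: (closure_dist_cl_dist_continuous mulx1 mul_cont open_unit c_qpm c_sub
            c_le1 c_cont c_translate).
- exact: (closure_dist_right_continuous c_cont).
- exact: (open_closure_ball c_cont).
Qed.

Lemma closure_dists_generate : @semiregular S -> generates_topology closure_dists.
Proof.
move=> S_sreg; apply: generates_topology_ball1.
- by move=> d /closure_dists_spec[].
- by move=> d x eps /closure_dists_spec[].
move=> W x oW Wx; have [W1 [xW1 W1W]] := S_sreg x W (open_nbhs_nbhs (conj oW Wx)).
have [V BV xVW1] := translate_base xW1; have [V0 U_nbhs U_cube] := U_seq BV.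
pose dV := closure_dist (chain_dist R mul (U V)).
have DdV : closure_dists dV by exists V.
have [_ _ _ _ dV_open] := closure_dists_spec DdV.
exists dV => //; apply: subset_trans W1W; rewrite -open_subsetE //.
apply: subset_trans (closure_ball1_sub (chain_dist_qpm R mul (U V)) (x:=x)) _.
apply: closureS => y /(chain_ball1_sub mulA mulx1 U_nbhs U_cube)[u].
by rewrite V0 => Vu <-; apply: xVW1; exists u.
Qed.

End ChainDistanceFamily.

Unset Implicit Arguments. Set Strict Implicit.

Theorem corollary6p2 (R : realType) (S : topologicalType) (mul : S -> S -> S)
  (e : S) (K : Type) :
  topological_semigroup mul -> open_right_unit mul e ->
  (* K is a set of cardinality chi(S) (any |K| >= chi(S) works too) *)
  @character_le S K ->
  (exists D : set (S -> S -> R),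
     (D #<= [set: K])%card /\ generates_topology D /\
     (forall d, D d -> [/\ quasi_pseudometric d, left_subinvariant mul d
                         & cl_dist_continuous d])) /\
  (@semiregular S ->
   exists D : set (S -> S -> R),
     (D #<= [set: K])%card /\ generates_topology D /\
     (forall d, D d -> [/\ quasi_pseudometric d, left_subinvariant mul d,
                         cl_dist_continuous d & right_continuous_qpm d])).
Proof.
move=> [mulA mul_cont] [mulx1 open_unit] /(_ e)[B [B_base B_K]].
have [U U_seq] := exists_cube_root_seqs mulx1 mul_cont.
have {}U_seq V : B V -> cube_root_seq mul e V (U V) by move=> /B_base.1/U_seq.
split=> [|S_sreg].
- exists [set chain_dist R mul (U V) | V in B]; split.
    exact: card_le_trans (card_image_le _ _) B_K.
  split; first exact: (chain_dists_generate R mulA mulx1 mul_cont open_unit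
                         B_base U_seq).
  by move=> d /(chain_dists_spec mulA mulx1 mul_cont open_unit U_seq)[].
- exists [set closure_dist (chain_dist R mul (U V)) | V in B]; split.
    exact: card_le_trans (card_image_le _ _) B_K.
  split; first exact: (closure_dists_generate R mulA mulx1 mul_cont open_unit
                         B_base U_seq S_sreg).
  by move=> d /(closure_dists_spec mulA mulx1 mul_cont open_unit U_seq)[].
Qed.
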